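(* Let $mG_1,\dots,mG_n$ be a finite sequence of canonical misinformation games such that $mG_{i+1}\in\mathcal{AD}(\{mG_i\})$ for all $i\in\{1,\dots,n-1\}$ and $mG_1\in\mathcal{AD}(\{mG_n\})$. Then $mG_i=mG_j$ for all $i,j$.
   Context: A normal-form game is $G=\langle N,S,P\rangle$ with finite players $N$, finite pure strategy sets $S_i$, positions $S=\times_i S_i$, payoffs $P_i:S\to\mathbb{R}$. A misinformation game $mG=\langle G^0,G^1,\dots,G^{|N|}\rangle$ consists of the actual game $G^0$ and subjective games $G^i$; it is canonical if all $G^i=\langle N,S,P^i\rangle$ differ from $G^0$ only in payoffs and in every $G^i$ all players have equally many pure strategies. $NME(mG)$ is the set of profiles $\sigma=(\sigma_1,\dots,\sigma_{|N|})$ such that each $\sigma_i$ is player $i$'s component of some Nash equilibrium of $G^i$. $\chi(\sigma)=\mathrm{supp}(\sigma_1)\times\dots\times\mathrm{supp}(\sigma_{|N|})$. For $\vec v\in S$, $mG_{\vec v}$ is obtained by replacing, in every $P^i$ ($i\ge1$), the payoff vector at position $\vec v$ by $P^0(\vec v)$ (the actual game $G^0$ is unchanged). For a set $M$ of misinformation games, $\mathcal{AD}(M)=\{mG_{\vec u}: mG\in M,\sigma\in NME(mG),\vec u\in\chi(\sigma)\}$. *)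

From HB Require Import structures.
From mathcomp Require Import all_boot all_order all_algebra.
Set Implicit Arguments. Unset Strict Implicit. Unset Printing Implicit Defensive.
Import Order.TTheory GRing.Theory Num.Theory.
Local Open Scope ring_scope.

Section MisGames.
Variable R : realFieldType.
(* players N = 'I_np ; every player has k pure strategies 'I_k *)
Variables np k : nat.

Definition pos := {ffun 'I_np -> 'I_k}.
Definition payoff := {ffun pos -> {ffun 'I_np -> R}}.

(* canonical misinformation game: actual game G^0 (payoffs P^0) and one
   subjective game G^i per player, all with the same players and strategies *)
Record mgame := MG { actual : payoff ; subj : {ffun 'I_np -> payoff} }.

Definition mixed (t : {ffun 'I_k -> R}) :=
  (forall a, 0 <= t a) /\ \sum_(a : 'I_k) t a = 1.
Definition profile := {ffun 'I_np -> {ffun 'I_k -> R}}.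
Definition mixed_profile (sg : profile) := forall i, mixed (sg i).

Definition exp_payoff (P : payoff) (sg : profile) (i : 'I_np) : R :=
  \sum_(s : pos) (\prod_(j < np) sg j (s j)) * P s i.

Definition deviate (sg : profile) (i : 'I_np) (t : {ffun 'I_k -> R}) : profile :=
  [ffun j => if j == i then t else sg j].

Definition nash (P : payoff) (sg : profile) :=
  mixed_profile sg /\
  forall i t, mixed t -> exp_payoff P (deviate sg i t) i <= exp_payoff P sg i.

Definition NME (mG : mgame) (sg : profile) :=
  forall i : 'I_np, exists e, nash (subj mG i) e /\ sg i = e i.

Definition chi (sg : profile) (s : pos) := forall i, sg i (s i) != 0.

Definition adapt (mG : mgame) (v : pos) : mgame :=
  MG (actual mG)
     [ffun i => [ffun s => if s == v then actual mG v else subj mG i s]].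

Definition AD (M : mgame -> Prop) (mG' : mgame) :=
  exists mG sg u, [/\ M mG, NME mG sg, chi sg u & mG' = adapt mG u].

End MisGames.

(* Adapting a misinformation game at a position only overwrites subjective
   payoffs by the actual ones, so it never creates new misinformation: the set
   of misinformed pairs (player, position) can only shrink, and if it keeps its
   size the adaptation changed nothing.  Along a cycle of adaptations the
   number of misinformed pairs is nonincreasing and returns to its initial
   value, hence it is constant and every adaptation is the identity. *)
From mathcomp Require Import all_boot all_order all_algebra.
Set Implicit Arguments. Unset Strict Implicit. Unset Printing Implicit Defensive.

Section ShrinkingCycle.
Variables (T : Type) (d : T -> nat) (x : nat -> T) (n : nat).
Hypothesis measure_step :
  forall i, (1 <= i < n)%N -> (d (x i.+1) <= d (x i))%N.
Hypothesis eq_of_measure_step :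
  forall i, (1 <= i < n)%N -> (d (x i) <= d (x i.+1))%N -> x i.+1 = x i.
Hypothesis measure_wrap : (d (x 1) <= d (x n))%N.

Lemma measure_nonincreasing :
  {in [pred i | 1 <= i <= n]%N &, {homo d \o x : i j / i <= j >-> j <= i}%N}.
Proof.
apply: homo_leq_in => [a|b a c ba cb|i j|i]; rewrite ?inE.
- exact: leqnn.
- exact: leq_trans cb ba.
- move=> /andP[i1 _] /andP[_ jn] l /andP[il lj].
  by rewrite inE (leq_trans i1 (ltnW il)) (leq_trans (ltnW lj) jn).
- by move=> /andP[i1 _] /andP[_ Si_n]; apply: measure_step; rewrite i1 Si_n.
Qed.

Lemma shrinking_cycle_const i : (1 <= i <= n)%N -> x i = x 1.
Proof.
elim: i => [|[|i] IH] // /andP[_ Si_n].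
have i_range : (1 <= i.+1 < n)%N by [].
have n_range : (1 <= n)%N := ltn_trans (ltn0Sn i) Si_n.
rewrite eq_of_measure_step //; first by apply: IH; rewrite (ltnW Si_n).
have d_i : (d (x i.+1) <= d (x 1))%N.
  by apply: measure_nonincreasing; rewrite // inE /= (ltnW Si_n).
have d_Si : (d (x n) <= d (x i.+2))%N.
  by apply: measure_nonincreasing; rewrite // inE /= n_range leqnn.
exact: leq_trans d_i (leq_trans measure_wrap d_Si).
Qed.

End ShrinkingCycle.

Section Misinformation.
Variables (R : realFieldType) (np k : nat).
Implicit Types (m : mgame R np k) (u : pos np k).

Definition misinformed m : {set 'I_np * pos np k} :=
  [set p | subj m p.1 p.2 != actual m p.2].

Lemma misinformed_adapt m u :
  misinformed (adapt m u) = [set p in misinformed m | p.2 != u].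
Proof.
apply/setP => -[i s]; rewrite !inE /= !ffunE.
by case: (s =P u) => [->|_]; rewrite ?eqxx ?andbT ?andbF.
Qed.

Lemma adapt_informed m u : (forall i, subj m i u = actual m u) -> adapt m u = m.
Proof.
case: m => a P /= informed; congr MG.
by apply/ffunP => i; apply/ffunP => s; rewrite !ffunE; case: eqP => // ->.
Qed.

Lemma misinformed_adapt_subset m u :
  misinformed (adapt m u) \subset misinformed m.
Proof. by rewrite misinformed_adapt setIdE subsetIl. Qed.

Lemma card_misinformed_adapt m u :
  (#|misinformed (adapt m u)| <= #|misinformed m|
     ?= iff (misinformed (adapt m u) == misinformed m))%N.
Proof. exact/subset_leqif_cards/misinformed_adapt_subset. Qed.

Lemma card_misinformed_adapt_eq m u :
  (#|misinformed m| <= #|misinformed (adapt m u)|)%N -> adapt m u = m.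
Proof.
move=> card_le; apply: adapt_informed => i; apply/eqP/negPn.
have /eqP same : misinformed (adapt m u) == misinformed m.
  by rewrite -(geq_leqif (card_misinformed_adapt m u)).
have : (i, u) \notin misinformed (adapt m u).
  by rewrite misinformed_adapt !inE eqxx andbF.
by rewrite same inE.
Qed.

Lemma AD_card_misinformed m m' :
  AD (fun x => x = m) m' -> (#|misinformed m'| <= #|misinformed m|)%N.
Proof.
by case=> _ [_ [u [-> _ _ ->]]]; apply: leq_of_leqif (card_misinformed_adapt _ _).
Qed.

Lemma AD_card_misinformed_eq m m' :
  AD (fun x => x = m) m' ->
  (#|misinformed m| <= #|misinformed m'|)%N -> m' = m.
Proof. by case=> _ [_ [u [-> _ _ ->]]]; apply: card_misinformed_adapt_eq. Qed.

End Misinformation.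

Theorem proposition9 (R : realFieldType) (np k n : nat)
    (mg : nat -> mgame R np k) :
  (forall i, (1 <= i < n)%N -> AD (fun x => x = mg i) (mg i.+1)) ->
  AD (fun x => x = mg n) (mg 1%N) ->
  forall i j, (1 <= i <= n)%N -> (1 <= j <= n)%N -> mg i = mg j.
Proof.
move=> AD_step AD_wrap i j i_range j_range.
have const := shrinking_cycle_const (d := fun m => #|misinformed m|)
  (fun l l_range => AD_card_misinformed (AD_step l l_range))
  (fun l l_range => AD_card_misinformed_eq (AD_step l l_range))
  (AD_card_misinformed AD_wrap).
by rewrite const // const.
Qed.
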